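(* In any instance of the binary voting game with $N$ agents, every regular strategy profile $\Sigma_N$ is an $\varepsilon$-strong Bayes Nash Equilibrium with $\varepsilon=2B(B+1)\,(1-A(\Sigma_N))$, where $B$ is the upper bound of the utility functions.
   Context: Binary voting game. $N$ agents each vote for $\mathbf{A}$ or $\mathbf{R}$. Unobserved world state $W\in\{L,H\}$ with common prior $P_L,P_H>0$. Conditional on $W$, each agent independently receives a signal $S_n\in\{l,h\}$ with $P_{sw}=\Pr[S_n=s\mid W=w]$, $P_{hH}>P_{hL}$, $P_{lH}<P_{lL}$. With threshold $\mu\in(0,1)$, $\mathbf{A}$ wins iff at least $\mu N$ agents vote $\mathbf{A}$, else $\mathbf{R}$. Agent $n$ has utility $v_n:\{L,H\}\times\{\mathbf{A},\mathbf{R}\}\to\{0,\dots,B\}$ ($B$ a positive integer) with $v_n(H,\mathbf{A})>v_n(L,\mathbf{A})$, $v_n(H,\mathbf{R})<v_n(L,\mathbf{R})$. Every agent is friendly ($v_n(H,\mathbf{A})>v_n(L,\mathbf{A})>v_n(L,\mathbf{R})>v_n(H,\mathbf{R})$), unfriendly ($v_n(L,\mathbf{R})>v_n(H,\mathbf{R})>v_n(H,\mathbf{A})>v_n(L,\mathbf{A})$), or contingent ($v_n(H,\mathbf{A})>v_n(H,\mathbf{R})$, $v_n(L,\mathbf{R})>v_n(L,\mathbf{A})$). With fixed constants $\alpha_F,\alpha_U,\alpha_C\ge0$ summing to $1$: $\lfloor\alpha_F N\rfloor$ friendly, $\lfloor\alpha_U N\rfloor$ unfriendly, the rest contingent. Standing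 assumption: $\alpha_F<\mu$ and $\alpha_U<1-\mu$, so the informed majority decision is $\mathbf{A}$ in $H$ and $\mathbf{R}$ in $L$. Strategy $\sigma=(\beta_l,\beta_h)$, $\beta_s$ = probability of voting $\mathbf{A}$ on signal $s$. Regular profile: friendly agents always vote $\mathbf{A}$, unfriendly agents always vote $\mathbf{R}$. $\lambda^{\mathbf{X}}_w(\Sigma)$: ex-ante probability that $\mathbf{X}$ wins in state $w$. Fidelity $A(\Sigma)=P_L\lambda^{\mathbf{R}}_L(\Sigma)+P_H\lambda^{\mathbf{A}}_H(\Sigma)$. Expected utility $u_n(\Sigma)=\sum_w P_w(\lambda^{\mathbf{A}}_w(\Sigma)v_n(w,\mathbf{A})+\lambda^{\mathbf{R}}_w(\Sigma)v_n(w,\mathbf{R}))$. $\Sigma$ is an $\varepsilon$-strong Bayes Nash Equilibrium if there is no set $D$ of agents and profile $\Sigma'$ with $\sigma'_n=\sigma_n$ for $n\notin D$, $u_n(\Sigma')\ge u_n(\Sigma)$ for all $n\in D$ and $u_n(\Sigma')>u_n(\Sigma)+\varepsilon$ for some $n\in D$. *)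

From HB Require Import structures.
From mathcomp Require Import all_boot all_order all_algebra.
From mathcomp Require Import reals.
Set Implicit Arguments. Unset Strict Implicit. Unset Printing Implicit Defensive.
Import Order.TTheory GRing.Theory Num.Theory.
Local Open Scope ring_scope.

Inductive world := L | H.
Inductive signal := sl | sh.
Inductive outcome := oA | oR.

(* A (mixed) strategy sigma = (beta_l, beta_h): probability of voting A on
   signal l, resp. on signal h. *)
Definition strategy (R : realType) := (R * R)%type.
Definition beta_l (R : realType) (s : strategy R) : R := s.1.
Definition beta_h (R : realType) (s : strategy R) : R := s.2.
Definition beta (R : realType) (s : strategy R) (x : signal) : R :=
  match x with sl => beta_l s | sh => beta_h s end.

Definition valid_strategy (R : realType) (s : strategy R) : Prop :=
  (0 <= beta_l s <= 1) /\ (0 <= beta_h s <= 1).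

(* Probability that an agent playing s votes A, conditional on state w,
   given signal likelihoods Psig x w = Pr[S_n = x | W = w]. *)
Definition probA (R : realType) (Psig : signal -> world -> R)
  (s : strategy R) (w : world) : R :=
  Psig sl w * beta s sl + Psig sh w * beta s sh.

(* Probability (conditional on state w) of the vote vector x
   (x n = true means agent n votes A); agents vote independently given w. *)
Definition prob_votes (R : realType) (N : nat) (Psig : signal -> world -> R)
  (Sigma : 'I_N -> strategy R) (w : world) (x : {ffun 'I_N -> bool}) : R :=
  \prod_(n < N) (if x n then probA Psig (Sigma n) w
                 else 1 - probA Psig (Sigma n) w).

Definition A_wins (R : realType) (N : nat) (mu : R) (x : {ffun 'I_N -> bool}) : bool :=
  mu * N%:R <= (#|[set n | x n]|)%:R.

Definition lamA (R : realType) (N : nat) (Psig : signal -> world -> R) (mu : R)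
  (Sigma : 'I_N -> strategy R) (w : world) : R :=
  \sum_(x : {ffun 'I_N -> bool} | A_wins mu x) prob_votes Psig Sigma w x.

Definition lamR (R : realType) (N : nat) (Psig : signal -> world -> R) (mu : R)
  (Sigma : 'I_N -> strategy R) (w : world) : R :=
  \sum_(x : {ffun 'I_N -> bool} | ~~ A_wins mu x) prob_votes Psig Sigma w x.

Definition lam (R : realType) (N : nat) (Psig : signal -> world -> R) (mu : R)
  (Sigma : 'I_N -> strategy R) (w : world) (o : outcome) : R :=
  match o with oA => lamA Psig mu Sigma w | oR => lamR Psig mu Sigma w end.

Definition fidelity (R : realType) (N : nat) (P : world -> R)
  (Psig : signal -> world -> R) (mu : R) (Sigma : 'I_N -> strategy R) : R :=
  P L * lamR Psig mu Sigma L + P H * lamA Psig mu Sigma H.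

Definition exp_util (R : realType) (N : nat) (P : world -> R)
  (Psig : signal -> world -> R) (mu : R) (vn : world -> outcome -> nat)
  (Sigma : 'I_N -> strategy R) : R :=
  \sum_(w <- [:: L; H])
     P w * (lamA Psig mu Sigma w * (vn w oA)%:R
            + lamR Psig mu Sigma w * (vn w oR)%:R).

Definition friendly (vn : world -> outcome -> nat) : bool :=
  [&& (vn L oA < vn H oA)%N, (vn L oR < vn L oA)%N & (vn H oR < vn L oR)%N].
Definition unfriendly (vn : world -> outcome -> nat) : bool :=
  [&& (vn H oR < vn L oR)%N, (vn H oA < vn H oR)%N & (vn L oA < vn H oA)%N].
Definition contingent (vn : world -> outcome -> nat) : bool :=
  (vn H oR < vn H oA)%N && (vn L oA < vn L oR)%N.

Definition regular (R : realType) (N : nat) (v : 'I_N -> world -> outcome -> nat)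
  (Sigma : 'I_N -> strategy R) : Prop :=
  (forall n, valid_strategy (Sigma n)) /\
  (forall n, friendly (v n) -> Sigma n = (1, 1)) /\
  (forall n, unfriendly (v n) -> Sigma n = (0, 0)).

Definition eps_strong_BNE (R : realType) (N : nat) (P : world -> R)
  (Psig : signal -> world -> R) (mu : R) (v : 'I_N -> world -> outcome -> nat)
  (eps : R) (Sigma : 'I_N -> strategy R) : Prop :=
  ~ exists (D : {set 'I_N}) (Sigma' : 'I_N -> strategy R),
      [/\ (forall n, valid_strategy (Sigma' n)),
          (forall n, n \notin D -> Sigma' n = Sigma n),
          (forall n, n \in D ->
             exp_util P Psig mu (v n) Sigma <= exp_util P Psig mu (v n) Sigma') &
          (exists2 n, n \in D &
             exp_util P Psig mu (v n) Sigma + eps < exp_util P Psig mu (v n) Sigma')].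

From HB Require Import structures.
From mathcomp Require Import all_boot all_order all_algebra.
From mathcomp Require Import reals.
From mathcomp Require Import ring lra.
Set Implicit Arguments. Unset Strict Implicit. Unset Printing Implicit Defensive.
Import Order.TTheory GRing.Theory Num.Theory.
Local Open Scope ring_scope.

(* Let e := 1 - A(Sigma) = P_L lambda^A_L(Sigma) + P_H lambda^R_H(Sigma).  When a
   coalition D switches to Sigma', agent m gains x g_L(m) + y g_H(m), where
   g_w(m) := v_m(w,A) - v_m(w,R), x := P_L (lambda^A_L(Sigma') - lambda^A_L(Sigma)) >= -e
   and y := P_H (lambda^A_H(Sigma') - lambda^A_H(Sigma)) <= e.  A contingent agent
   (g_L < 0 < g_H) therefore gains at most 2Be.  The event "A wins" is an up-set of
   vote vectors, so lambda^A is monotone in every agent's probability of voting A;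
   since friendly agents already vote A, a coalition of friendly agents has x <= 0,
   and a friendly agent then gains at most Be.  Otherwise the coalition contains an
   agent with g_L <= -1 whose weak gain forces x <= Be (if y >= 0) or x + y <= 0 (if
   y < 0), so the friendly agent gains at most B(B+1)e.  Unfriendly agents are the
   mirror image.  Hence no member of D gains more than B(B+1)e. *)

Section BernoulliProduct.
Variables (R : comPzRingType) (N : nat).
Implicit Types (p : 'I_N -> R) (x : {ffun 'I_N -> bool}).

Definition bernoulli_prod p x : R :=
  \prod_(n < N) (if x n then p n else 1 - p n).

Lemma sum_bernoulli_prod p : \sum_x bernoulli_prod p x = 1.
Proof.
rewrite -(bigA_distr_bigA (fun n (b : bool) => if b then p n else 1 - p n)).
by apply: big1 => n _; rewrite big_bool /= addrC subrK.
Qed.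

Lemma eq_bernoulli_prod p p' :
  p =1 p' -> bernoulli_prod p =1 bernoulli_prod p'.
Proof. by move=> eq_p x; apply: eq_bigr => n _; rewrite eq_p. Qed.

Lemma sum_bernoulli_prodC p (f : pred {ffun 'I_N -> bool}) :
  \sum_(x | ~~ f x) bernoulli_prod p x = 1 - \sum_(x | f x) bernoulli_prod p x.
Proof.
by rewrite -(sum_bernoulli_prod p) [\sum_x _](bigID f) /= addrAC subrr add0r.
Qed.

End BernoulliProduct.

Definition upward_closed (N : nat) (f : pred {ffun 'I_N -> bool}) :=
  forall x y : {ffun 'I_N -> bool}, (forall n, x n -> y n) -> f x -> f y.

Definition toggle (N : nat) (i : 'I_N) (x : {ffun 'I_N -> bool}) :
  {ffun 'I_N -> bool} := [ffun n => if n == i then ~~ x n else x n].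

Lemma toggleK (N : nat) (i : 'I_N) : involutive (toggle i).
Proof.
by move=> x; apply/ffunP => n; rewrite !ffunE; case: eqP => // ->; rewrite negbK.
Qed.

Section BernoulliMonotone.
Variables (R : realDomainType) (N : nat) (f : pred {ffun 'I_N -> bool}).
Hypothesis f_up : upward_closed f.
Implicit Types (p q : 'I_N -> R).

Lemma bernoulli_prod_ge0 p x :
  (forall n, 0 <= p n <= 1) -> 0 <= bernoulli_prod p x.
Proof. by move=> p01; apply: prodr_ge0 => n _; case: (x n); have := p01 n; lra. Qed.

Lemma sum_bernoulli_prod_mono1 p q (i : 'I_N) :
  (forall n, 0 <= p n <= 1) -> (forall n, n != i -> p n = q n) -> p i <= q i ->
  \sum_(x | f x) bernoulli_prod p x <= \sum_(x | f x) bernoulli_prod q x.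
Proof.
move=> p01 eq_pq le_pq.
pose rest (x : {ffun 'I_N -> bool}) :=
  \prod_(n < N | n != i) (if x n then p n else 1 - p n).
pose U := \sum_(x | f x && x i) rest x.
pose V := \sum_(x | f x && ~~ x i) rest x.
have affine r : (forall n, n != i -> r n = p n) ->
    \sum_(x | f x) bernoulli_prod r x = r i * U + (1 - r i) * V.
  move=> eq_rp; rewrite (bigID (fun x : {ffun 'I_N -> bool} => x i)) /= !mulr_sumr.
  congr (_ + _); apply: eq_bigr => x /andP[_ xi];
    rewrite /bernoulli_prod (bigD1 i) //=; case: (x i) xi => // _;
    by congr (_ * _); apply: eq_bigr => n /eq_rp ->.
(* Toggling coordinate [i] injects the configurations counted by [V] into those
   counted by [U], since [f] is upward closed. *)
have V_le_U : V <= U.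
  rewrite /V (reindex_inj (can_inj (toggleK i))) /=.
  rewrite big_mkcond [U]big_mkcond; apply: ler_sum => x _.
  rewrite !ffunE eqxx negbK.
  have rest_toggle : rest (toggle i x) = rest x.
    by apply: eq_bigr => n /negbTE ni; rewrite ffunE ni.
  have rest_ge0 : 0 <= rest x.
    by apply: prodr_ge0 => n _; case: (x n); have := p01 n; lra.
  case xi: (x i); rewrite ?andbF ?andbT // rest_toggle.
  case: ifP => ftx; last by case: ifP.
  rewrite (f_up _ ftx) // => n.
  by rewrite ffunE; case: eqP => [->|//]; rewrite xi.
rewrite affine // (affine q) => [|n /eq_pq //].
rewrite -subr_ge0.
have -> : q i * U + (1 - q i) * V - (p i * U + (1 - p i) * V)
          = (q i - p i) * (U - V) by ring.
by apply: mulr_ge0; rewrite subr_ge0.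
Qed.

Lemma sum_bernoulli_prod_mono p q :
  (forall n, 0 <= p n <= 1) -> (forall n, 0 <= q n <= 1) -> (forall n, p n <= q n) ->
  \sum_(x | f x) bernoulli_prod p x <= \sum_(x | f x) bernoulli_prod q x.
Proof.
move=> p01 q01 le_pq.
pose mix k (n : 'I_N) := if (n < k)%N then q n else p n.
have mix01 k n : 0 <= mix k n <= 1 by rewrite /mix; case: ifP.
have sum_mix r k : r =1 mix k ->
    \sum_(x | f x) bernoulli_prod r x = \sum_(x | f x) bernoulli_prod (mix k) x.
  by move=> eq_r; apply: eq_bigr => x _; apply: eq_bernoulli_prod.
suff le_mix k : (k <= N)%N ->
    \sum_(x | f x) bernoulli_prod p x <= \sum_(x | f x) bernoulli_prod (mix k) x.
  by rewrite (sum_mix q N) ?le_mix // => n; rewrite /mix ltn_ord.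
elim: k => [_|k IHk lt_kN]; first by rewrite (sum_mix p 0) // => n; rewrite /mix ltn0.
apply: le_trans (IHk (ltnW lt_kN)) _.
apply: (sum_bernoulli_prod_mono1 (i := Ordinal lt_kN)) => // [n ni|].
  move: ni; rewrite -val_eqE /= => /negbTE nk.
  by rewrite /mix [(n < k.+1)%N]ltnS [(n <= k)%N]leq_eqVlt nk.
by rewrite /mix /= ltnn ltnSn.
Qed.

End BernoulliMonotone.

Lemma gain_le_opposite_signs (R : realDomainType) (x y e b dL dH : R) :
  0 <= e -> 1 <= b -> -e <= x -> y <= e -> -b <= dL -> dL <= 0 -> 0 <= dH -> dH <= b ->
  x * dL + y * dH <= b * (b + 1) * e.
Proof.
move=> e_ge0 b_ge1 le_ex le_ye dL_ge dL_le0 dH_ge0 dH_le.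
have xdL : x * dL <= e * b by nra.
have ydH : y * dH <= e * b by nra.
have : 0 <= b * e * (b - 1) by rewrite !mulr_ge0 // ?subr_ge0 //; lra.
lra.
Qed.

Lemma gain_le_of_x_le0 (R : realDomainType) (x y e b dL dH : R) :
  0 <= e -> x <= 0 -> y <= e -> 0 <= dL -> 0 <= dH -> dH <= b ->
  x * dL + y * dH <= b * (b + 1) * e.
Proof. by move=> *; nra. Qed.

Lemma gain_le_of_rival (R : realDomainType) (x y e b dL dH rL rH : R) :
  0 <= e -> y <= e -> 0 <= dL -> dL <= dH -> dH <= b ->
  rL <= -1 -> rL <= rH -> rH <= b -> 0 <= x * rL + y * rH ->
  x * dL + y * dH <= b * (b + 1) * e.
Proof.
(* The rival's weak gain gives [x <= x * - rL <= y * rH]. *)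
move=> e_ge0 le_ye dL_ge0 le_dLH dH_le rL_le le_rLH rH_le rival.
have [x_le0|x_gt0] := lerP x 0.
  by apply: gain_le_of_x_le0 => //; apply: le_trans le_dLH.
have [y_ge0|y_lt0] := lerP 0 y.
  have x_le : x <= b * e by nra.
  nra.
have x_le : x <= - y by nra.
nra.
Qed.

Definition util_gap (R : pzRingType) (vn : world -> outcome -> nat) (w : world) : R :=
  (vn w oA)%:R - (vn w oR)%:R.
Arguments util_gap {R} vn w.

Lemma util_gap_ge1 {R : realDomainType} (vn : world -> outcome -> nat) w :
  (vn w oR < vn w oA)%N -> 1 <= util_gap vn w :> R.
Proof. by move=> lt_RA; rewrite lerBrDr nat1r ler_nat. Qed.

Lemma util_gap_le_Nnat1 {R : realDomainType} (vn : world -> outcome -> nat) w :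
  (vn w oA < vn w oR)%N -> util_gap vn w <= -1 :> R.
Proof. by move=> lt_AR; rewrite /util_gap -opprB lerN2 lerBrDr nat1r ler_nat. Qed.

Lemma util_gap_bounds {R : realDomainType} (vn : world -> outcome -> nat) (B : nat) w :
  (forall o, (vn w o <= B)%N) ->
  - B%:R <= util_gap vn w :> R /\ util_gap vn w <= B%:R :> R.
Proof.
move=> vn_le; rewrite /util_gap.
have := ler0n R (vn w oA); have := ler0n R (vn w oR).
have := vn_le oA; have := vn_le oR; rewrite -!(ler_nat R).
by move=> *; split; lra.
Qed.

Lemma util_gap_LH {R : realDomainType} (vn : world -> outcome -> nat) :
  (vn L oA < vn H oA)%N -> (vn H oR < vn L oR)%N -> util_gap vn L <= util_gap vn H :> R.
Proof.
move=> ltA ltR; rewrite /util_gap lerBlDr addrAC lerBrDr -!natrD ler_nat.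
by apply: leq_add; apply: ltnW.
Qed.

Section Game.
Variables (R : realType) (N : nat) (Psig : signal -> world -> R) (mu : R).
Hypotheses (Psig_ge0 : forall s w, 0 <= Psig s w)
           (Psig_sum1 : forall w, Psig sl w + Psig sh w = 1).
Implicit Types (S : 'I_N -> strategy R).

Lemma probA_ge0_le1 s w : valid_strategy s -> 0 <= probA Psig s w <= 1.
Proof.
rewrite /probA /= /beta_l /beta_h => -[/andP[? ?] /andP[? ?]].
have := Psig_ge0 sl w; have := Psig_ge0 sh w; have := Psig_sum1 w.
by move=> *; apply/andP; split; nra.
Qed.

Lemma probA_always_A w : probA Psig (1, 1) w = 1.
Proof. by rewrite /probA /= /beta_l /beta_h /= !mulr1. Qed.

Lemma probA_never_A w : probA Psig (0, 0) w = 0.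
Proof. by rewrite /probA /= /beta_l /beta_h /= !mulr0 addr0. Qed.

Lemma A_wins_upward_closed : upward_closed (@A_wins R N mu).
Proof.
move=> x y le_xy; rewrite /A_wins => /le_trans; apply.
by rewrite ler_nat subset_leq_card //; apply/subsetP => n; rewrite !inE; apply: le_xy.
Qed.

Lemma lamR_lamA S w : lamR Psig mu S w = 1 - lamA Psig mu S w.
Proof. exact: sum_bernoulli_prodC. Qed.

Lemma lamA_ge0_le1 S w :
  (forall n, valid_strategy (S n)) -> 0 <= lamA Psig mu S w <= 1.
Proof.
move=> S_valid.
have sum_ge0 (f : pred {ffun 'I_N -> bool}) :
    0 <= \sum_(x | f x) bernoulli_prod (fun n => probA Psig (S n) w) x.
  by apply: sumr_ge0 => x _; apply: bernoulli_prod_ge0 => n; apply: probA_ge0_le1.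
apply/andP; split; first exact: sum_ge0.
by rewrite -subr_ge0 -lamR_lamA; apply: sum_ge0.
Qed.

Lemma lamA_mono S S' w :
  (forall n, valid_strategy (S n)) -> (forall n, valid_strategy (S' n)) ->
  (forall n, probA Psig (S n) w <= probA Psig (S' n) w) ->
  lamA Psig mu S w <= lamA Psig mu S' w.
Proof.
move=> S_valid S'_valid le_SS'.
by apply: (sum_bernoulli_prod_mono A_wins_upward_closed) => // n;
  apply: probA_ge0_le1.
Qed.

Lemma exp_util_sub (P : world -> R) vn S S' :
  exp_util P Psig mu vn S' - exp_util P Psig mu vn S =
    P L * (lamA Psig mu S' L - lamA Psig mu S L) * util_gap vn L
  + P H * (lamA Psig mu S' H - lamA Psig mu S H) * util_gap vn H.
Proof. by rewrite /exp_util !big_cons !big_nil !lamR_lamA /util_gap; ring. Qed.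

Lemma one_sub_fidelity (P : world -> R) S : P L + P H = 1 ->
  1 - fidelity P Psig mu S = P L * lamA Psig mu S L + P H * (1 - lamA Psig mu S H).
Proof. by move=> P_sum1; rewrite /fidelity lamR_lamA -{1}P_sum1; ring. Qed.

Lemma fidelity_le1 (P : world -> R) S :
  (forall w, 0 <= P w) -> P L + P H = 1 -> (forall n, valid_strategy (S n)) ->
  fidelity P Psig mu S <= 1.
Proof.
move=> P_ge0 P_sum1 S_valid; rewrite -subr_ge0 one_sub_fidelity //.
have /andP[? ?] := lamA_ge0_le1 L S_valid; have /andP[? ?] := lamA_ge0_le1 H S_valid.
by rewrite addr_ge0 // mulr_ge0 // subr_ge0.
Qed.

End Game.

Lemma friendly_HR_lt_HA vn : friendly vn -> (vn H oR < vn H oA)%N.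
Proof. by case/and3P=> ? ? ?; apply: ltn_trans (ltn_trans _ _) _; eassumption. Qed.

Lemma unfriendly_LA_lt_LR vn : unfriendly vn -> (vn L oA < vn L oR)%N.
Proof. by case/and3P=> ? ? ?; apply: ltn_trans (ltn_trans _ _) _; eassumption. Qed.

Section Deviation.
Variables (R : realType) (N : nat) (P : world -> R) (Psig : signal -> world -> R)
  (mu : R) (B : nat) (v : 'I_N -> world -> outcome -> nat)
  (Sigma Sigma' : 'I_N -> strategy R) (D : {set 'I_N}).
Hypotheses (P_ge0 : forall w, 0 <= P w) (P_sum1 : P L + P H = 1)
  (Psig_ge0 : forall s w, 0 <= Psig s w)
  (Psig_sum1 : forall w, Psig sl w + Psig sh w = 1)
  (B_gt0 : (0 < B)%N) (v_le_B : forall n w o, (v n w o <= B)%N)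
  (v_mon : forall n, (v n L oA < v n H oA)%N /\ (v n H oR < v n L oR)%N)
  (v_types : forall n, friendly (v n) \/ unfriendly (v n) \/ contingent (v n))
  (Sigma_regular : regular v Sigma)
  (Sigma'_valid : forall n, valid_strategy (Sigma' n))
  (Sigma'_out : forall n, n \notin D -> Sigma' n = Sigma n).

Let b : R := B%:R.
Let e : R := 1 - fidelity P Psig mu Sigma.
Let x := P L * (lamA Psig mu Sigma' L - lamA Psig mu Sigma L).
Let y := P H * (lamA Psig mu Sigma' H - lamA Psig mu Sigma H).
Let gain n := x * util_gap (v n) L + y * util_gap (v n) H.

Let Sigma_valid : forall n, valid_strategy (Sigma n) := Sigma_regular.1.

Let b_ge1 : 1 <= b. Proof. by rewrite ler1n. Qed.

Let lam_bounds w :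
  0 <= lamA Psig mu Sigma w <= 1 /\ 0 <= lamA Psig mu Sigma' w <= 1.
Proof. by split; apply: lamA_ge0_le1. Qed.

Let e_ge0 : 0 <= e.
Proof. by rewrite subr_ge0 fidelity_le1. Qed.

Let x_ge_Ne : - e <= x.
Proof.
rewrite /x /e one_sub_fidelity //.
have [/andP[? ?] /andP[? ?]] := lam_bounds L; have [/andP[? ?] _] := lam_bounds H.
have := P_ge0 L; have := P_ge0 H; nra.
Qed.

Let y_le_e : y <= e.
Proof.
rewrite /y /e one_sub_fidelity //.
have [/andP[? ?] /andP[? ?]] := lam_bounds H; have [/andP[? ?] _] := lam_bounds L.
have := P_ge0 L; have := P_ge0 H; nra.
Qed.

Let x_le0_of_friendly : (forall m, m \in D -> friendly (v m)) -> x <= 0.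
Proof.
move=> D_friendly; apply: mulr_ge0_le0 => //; rewrite subr_le0.
apply: lamA_mono => // m; have [mD|mD] := boolP (m \in D); last by rewrite Sigma'_out.
rewrite (Sigma_regular.2.1 m (D_friendly m mD)) probA_always_A //.
by case/andP: (probA_ge0_le1 Psig_ge0 Psig_sum1 L (Sigma'_valid m)).
Qed.

Let y_ge0_of_unfriendly : (forall m, m \in D -> unfriendly (v m)) -> 0 <= y.
Proof.
move=> D_unfriendly; apply: mulr_ge0 => //; rewrite subr_ge0.
apply: lamA_mono => // m; have [mD|mD] := boolP (m \in D); last by rewrite Sigma'_out.
rewrite (Sigma_regular.2.2 m (D_unfriendly m mD)) probA_never_A //.
by case/andP: (probA_ge0_le1 Psig_ge0 Psig_sum1 H (Sigma'_valid m)).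
Qed.

Let gap_bounds n w : - b <= util_gap (v n) w /\ util_gap (v n) w <= b.
Proof. exact: util_gap_bounds. Qed.

Let gap_LH n : util_gap (v n) L <= util_gap (v n) H :> R.
Proof. by case: (v_mon n); apply: util_gap_LH. Qed.

Let gain_le_friendly n : friendly (v n) ->
  (forall m, m \in D -> 0 <= gain m) -> gain n <= b * (b + 1) * e.
Proof.
move=> fr_n D_gain; have [_ gH_le] := gap_bounds n H.
have gL_ge0 : 0 <= util_gap (v n) L :> R.
  have : 1 <= util_gap (v n) L :> R by apply: util_gap_ge1; case/and3P: fr_n.
  lra.
have [/forall_inP D_fr | /forall_inPn[m mD nfr_m]] :=
  boolP [forall m in D, friendly (v m)].
  apply: gain_le_of_x_le0 => //; first exact: x_le0_of_friendly.
  exact: le_trans (gap_LH n).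
have gLm_le : util_gap (v m) L <= -1 :> R.
  apply: util_gap_le_Nnat1; case: (v_types m) => [fr_m|[/unfriendly_LA_lt_LR //|/andP[] //]].
  by rewrite fr_m in nfr_m.
have [_ gHm_le] := gap_bounds m H.
exact: gain_le_of_rival gL_ge0 (gap_LH n) gH_le gLm_le (gap_LH m) gHm_le (D_gain m mD).
Qed.

Let gain_le_unfriendly n : unfriendly (v n) ->
  (forall m, m \in D -> 0 <= gain m) -> gain n <= b * (b + 1) * e.
Proof.
move=> unf_n D_gain; have [gL_ge _] := gap_bounds n L.
have gH_le0 : util_gap (v n) H <= 0 :> R.
  have : util_gap (v n) H <= -1 :> R by apply: util_gap_le_Nnat1; case/and3P: unf_n.
  lra.
(* Swapping the two states and the two outcomes turns the unfriendly case into the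
   friendly one. *)
have gain_sym m : gain m = - y * - util_gap (v m) H + - x * - util_gap (v m) L.
  by rewrite /gain mulrNN addrC mulrNN.
rewrite gain_sym.
have [/forall_inP D_unf | /forall_inPn[m mD nunf_m]] :=
  boolP [forall m in D, unfriendly (v m)].
  apply: gain_le_of_x_le0; rewrite ?oppr_le0 ?oppr_ge0 // 1?lerNl //.
    exact: y_ge0_of_unfriendly.
  exact: le_trans (gap_LH n) gH_le0.
have gHm_ge : 1 <= util_gap (v m) H :> R.
  apply: util_gap_ge1; case: (v_types m) => [/friendly_HR_lt_HA //|[unf_m|/andP[] //]].
  by rewrite unf_m in nunf_m.
have := D_gain m mD; rewrite gain_sym => gain_m.
have [gLm_ge _] := gap_bounds m L.
apply: (gain_le_of_rival _ _ _ _ _ _ _ _ gain_m);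
  by rewrite ?oppr_ge0 ?lerN2 ?gap_LH // 1?lerNl.
Qed.

Let gain_le_contingent n : contingent (v n) -> gain n <= b * (b + 1) * e.
Proof.
case/andP=> lt_H lt_L.
have gH_ge1 : 1 <= util_gap (v n) H :> R by apply: util_gap_ge1.
have gL_le : util_gap (v n) L <= -1 :> R by apply: util_gap_le_Nnat1.
have [gL_ge _] := gap_bounds n L; have [_ gH_le] := gap_bounds n H.
apply: gain_le_opposite_signs => //.
  exact: le_trans gL_le (lerN10 R).
exact: le_trans ler01 gH_ge1.
Qed.

Lemma coalition_gain_le :
  (forall m, m \in D ->
     exp_util P Psig mu (v m) Sigma <= exp_util P Psig mu (v m) Sigma') ->
  forall n, n \in D ->
    exp_util P Psig mu (v n) Sigma' - exp_util P Psig mu (v n) Sigma <= b * (b + 1) * e.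
Proof.
move=> D_weak.
have gain_eq m : exp_util P Psig mu (v m) Sigma' - exp_util P Psig mu (v m) Sigma = gain m.
  by rewrite exp_util_sub // /gain /x /y !mulrA.
have D_gain m : m \in D -> 0 <= gain m by move=> mD; rewrite -gain_eq subr_ge0 D_weak.
move=> n _; rewrite gain_eq.
case: (v_types n) => [fr_n | [unf_n | con_n]].
- exact: gain_le_friendly.
- exact: gain_le_unfriendly.
- exact: gain_le_contingent.
Qed.

End Deviation.

Theorem lemma1 (R : realType) (N : nat) (P : world -> R)
  (Psig : signal -> world -> R) (mu : R) (B : nat)
  (v : 'I_N -> world -> outcome -> nat) (aF aU aC : R)
  (Sigma : 'I_N -> strategy R) :
  (0 < N)%N ->
  (* common prior *)
  0 < P L -> 0 < P H -> P L + P H = 1 ->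
  (* signal likelihoods *)
  (forall x w, 0 <= Psig x w) ->
  (forall w, Psig sl w + Psig sh w = 1) ->
  Psig sh H > Psig sh L -> Psig sl H < Psig sl L ->
  (* threshold *)
  0 < mu < 1 ->
  (* utilities with values in {0, ..., B}, B a positive integer *)
  (0 < B)%N ->
  (forall n w o, (v n w o <= B)%N) ->
  (forall n, (v n H oA > v n L oA)%N /\ (v n H oR < v n L oR)%N) ->
  (* every agent is friendly, unfriendly or contingent *)
  (forall n, friendly (v n) \/ unfriendly (v n) \/ contingent (v n)) ->
  (* population fractions *)
  0 <= aF -> 0 <= aU -> 0 <= aC -> aF + aU + aC = 1 ->
  (#|[set n | friendly (v n)]| : int) = Num.floor (aF * N%:R) ->
  (#|[set n | unfriendly (v n)]| : int) = Num.floor (aU * N%:R) ->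
  (* standing assumption *)
  aF < mu -> aU < 1 - mu ->
  regular v Sigma ->
  eps_strong_BNE P Psig mu v
    (2 * B%:R * (B%:R + 1) * (1 - fidelity P Psig mu Sigma)) Sigma.
Proof.
move=> _ PL_gt0 PH_gt0 P_sum1 Psig_ge0 Psig_sum1 _ _ _ B_gt0 v_le_B v_mon v_types
  _ _ _ _ _ _ _ _ Sigma_regular.
case=> D [Sigma' [Sigma'_valid Sigma'_out D_weak [n nD n_gain]]].
have P_ge0 w : 0 <= P w by case: w; apply: ltW.
have := coalition_gain_le P_ge0 P_sum1 Psig_ge0 Psig_sum1 B_gt0 v_le_B v_mon v_types
  Sigma_regular Sigma'_valid Sigma'_out D_weak nD.
have := fidelity_le1 mu Psig_ge0 Psig_sum1 P_ge0 P_sum1 Sigma_regular.1.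
rewrite -subr_ge0 => e_ge0 gain_le.
(* The coalition bound is B(B+1)e, so the factor 2 in the statement is slack. *)
have : 0 <= B%:R * (B%:R + 1) * (1 - fidelity P Psig mu Sigma) :> R.
  by rewrite !mulr_ge0 // addr_ge0.
lra.
Qed.
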